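(* Let $r\in\wedge^2\mathfrak g$ be a non-degenerate solution of the classical Yang–Baxter equation on a finite-dimensional real Lie algebra $(\mathfrak g,[\cdot,\cdot])$ (i.e. $r^\sharp$ is invertible), and let $n:\mathfrak g\to\mathfrak g$ be a linear map with $n\circ r^\sharp=r^\sharp\circ{}^tn$ and $C(r,n)=0$. Then $nr$ (defined by $(nr)^\sharp=n\circ r^\sharp$) is a solution of the classical Yang–Baxter equation if and only if $n$ is a Nijenhuis operator.
   Context: For $r\in\wedge^2\mathfrak g$, $r^\sharp:\mathfrak g^*\to\mathfrak g$ is defined by $\langle\eta_2,r^\sharp\eta_1\rangle=r(\eta_1,\eta_2)$. $r$ solves the classical Yang–Baxter equation iff $\langle\eta_1,[r^\sharp\eta_2,r^\sharp\eta_3]\rangle-\langle\eta_2,[r^\sharp\eta_1,r^\sharp\eta_3]\rangle+\langle\eta_3,[r^\sharp\eta_1,r^\sharp\eta_2]\rangle=0$ for all $\eta_i$. $\langle\mathrm{ad}^*_\xi\eta,\zeta\rangle=-\langle\eta,[\xi,\zeta]\rangle$; ${}^tn$ is the transpose of $n$; $C(r,n)(\eta_1,\eta_2)=[{}^tn,\mathrm{ad}^*_{r^\sharp\eta_1}]\eta_2-[{}^tn,\mathrm{ad}^*_{r^\sharp\eta_2}]\eta_1$. $n$ is Nijenhuis if $n([n\xi_1,\xi_2]+[\xi_1,n\xi_2]-n[\xi_1,\xi_2])=[n\xi_1,n\xi_2]$ for all $\xi_i$. *)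

(* The Lie algebra g is R^d (column vectors 'cV[R]_d) with an
   abstract Lie bracket; its dual g^* is also 'cV[R]_d, with pairing
   <eta, xi> = eta^T xi. *)
From HB Require Import structures.
From mathcomp Require Import all_boot all_order all_algebra.
From mathcomp Require Import reals.
Set Implicit Arguments. Unset Strict Implicit. Unset Printing Implicit Defensive.
Import Order.TTheory GRing.Theory Num.Theory.
Local Open Scope ring_scope.

Section LieDefs.
Variables (R : realType) (d : nat).
Notation vec := 'cV[R]_d.

Definition pair (eta xi : vec) : R := (eta^T *m xi) 0 0.

Definition is_lie_bracket (br : vec -> vec -> vec) : Prop :=
  [/\ (forall a x y z, br (a *: x + y) z = a *: br x z + br y z),
      (forall a x y z, br z (a *: x + y) = a *: br z x + br z y),
      (forall x, br x x = 0)
    & (forall x y z, br x (br y z) + br y (br z x) + br z (br x y) = 0)].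

(* a bivector r in wedge^2 g is a skew bilinear form on g^*,
   r(eta1, eta2) = eta1^T r eta2, with r^T = - r *)
Definition bivector (r : 'M[R]_d) : Prop := r^T = - r.
Definition bivec_app (r : 'M[R]_d) (eta1 eta2 : vec) : R := (eta1^T *m r *m eta2) 0 0.

(* r^sharp : g^* -> g, <eta2, r^sharp eta1> = r(eta1, eta2); as a matrix it is r^T *)
Definition rsharp (r : 'M[R]_d) : 'M[R]_d := r^T.

Definition CYBE (br : vec -> vec -> vec) (r : 'M[R]_d) : Prop :=
  forall eta1 eta2 eta3 : vec,
    pair eta1 (br (rsharp r *m eta2) (rsharp r *m eta3))
  - pair eta2 (br (rsharp r *m eta1) (rsharp r *m eta3))
  + pair eta3 (br (rsharp r *m eta1) (rsharp r *m eta2)) = 0.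

(* coadjoint action: <ad^*_xi eta, zeta> = - <eta, [xi, zeta]>
   (coordinates obtained by pairing with the standard basis) *)
Definition coad (br : vec -> vec -> vec) (xi eta : vec) : vec :=
  \col_i (- pair eta (br xi (delta_mx i 0))).

Definition tr_op (n : 'M[R]_d) : 'M[R]_d := n^T.

Definition Crn (br : vec -> vec -> vec) (r n : 'M[R]_d) (eta1 eta2 : vec) : vec :=
  (tr_op n *m coad br (rsharp r *m eta1) eta2
     - coad br (rsharp r *m eta1) (tr_op n *m eta2))
  - (tr_op n *m coad br (rsharp r *m eta2) eta1
     - coad br (rsharp r *m eta2) (tr_op n *m eta1)).

Definition nr (n r : 'M[R]_d) : 'M[R]_d := (n *m rsharp r)^T.

Definition Nijenhuis (br : vec -> vec -> vec) (n : 'M[R]_d) : Prop :=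
  forall x1 x2 : vec,
    n *m (br (n *m x1) x2 + br x1 (n *m x2) - n *m br x1 x2)
    = br (n *m x1) (n *m x2).

End LieDefs.

(* Write P for r^sharp and Q for its inverse. The CYBE for r says that the
   2-form w(a, b) = <Q a, b> on g is closed, and n P = P tn says that n is
   w-symmetric. Substituting eta_i = Q x_i, the CYBE expression of nr becomes
   w(x1, T_n(x2, x3)) plus a combination of three instances of dw = 0 and one
   instance of C(r, n) = 0, where T_n is the Nijenhuis torsion of n. Since w is
   non-degenerate, nr solves the CYBE exactly when T_n vanishes. *)
From HB Require Import structures.
From mathcomp Require Import all_boot all_order all_algebra.
From mathcomp Require Import reals.
From mathcomp Require Import lra.
Set Implicit Arguments.
Unset Strict Implicit.
Unset Printing Implicit Defensive.
Import GRing.Theory Num.Theory.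
Local Open Scope ring_scope.

Section Pairing.
Variables (R : realType) (d : nat).
Notation vec := 'cV[R]_d.

Lemma pair_mulmxr (a b : vec) (M : 'M[R]_d) : pair a (M *m b) = pair (M^T *m a) b.
Proof. by rewrite /pair trmx_mul trmxK mulmxA. Qed.

Lemma pair_mulmxl (a b : vec) (M : 'M[R]_d) : pair (M *m a) b = pair a (M^T *m b).
Proof. by rewrite pair_mulmxr trmxK. Qed.

Lemma pair0r (a : vec) : pair a 0 = 0.
Proof. by rewrite /pair mulmx0 mxE. Qed.

Lemma pairDr (a b c : vec) : pair a (b + c) = pair a b + pair a c.
Proof. by rewrite /pair mulmxDr mxE. Qed.

Lemma pairNr (a b : vec) : pair a (- b) = - pair a b.
Proof. by rewrite /pair mulmxN mxE. Qed.

Lemma pairBr (a b c : vec) : pair a (b - c) = pair a b - pair a c.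
Proof. by rewrite pairDr pairNr. Qed.

Lemma pairZr (a b : vec) k : pair a (k *: b) = k * pair a b.
Proof. by rewrite /pair -scalemxAr mxE. Qed.

Lemma pair_sumr (a : vec) (F : 'I_d -> vec) :
  pair a (\sum_k F k) = \sum_k pair a (F k).
Proof. exact: (big_morph (pair a) (pairDr a) (pair0r a)). Qed.

Lemma pair0l (b : vec) : pair 0 b = 0.
Proof. by rewrite /pair linear0 mul0mx mxE. Qed.

Lemma pairBl (a b c : vec) : pair (a - b) c = pair a c - pair b c.
Proof. by rewrite /pair raddfB mulmxBl !mxE. Qed.

Lemma pairE (a b : vec) : pair a b = \sum_k a k 0 * b k 0.
Proof. by rewrite /pair !mxE; apply: eq_bigr => k _; rewrite mxE. Qed.

Lemma pair_delta (i : 'I_d) (v : vec) : pair (delta_mx i 0) v = v i 0.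
Proof.
rewrite pairE (bigD1 i) //= big1 ?addr0; first by rewrite mxE !eqxx mul1r.
by move=> k /negPf ki; rewrite mxE ki mul0r.
Qed.

Lemma pair_eq0 (v : vec) : (forall a, pair a v = 0) -> v = 0.
Proof.
by move=> v0; apply/matrixP => i j; rewrite (ord1 j) mxE -pair_delta v0.
Qed.

Lemma col_delta_decomp (z : vec) : z = \sum_k z k 0 *: delta_mx k 0.
Proof.
apply/matrixP => i j; rewrite (ord1 j) summxE (bigD1 i) //= big1 ?addr0.
  by rewrite !mxE !eqxx mulr1.
by move=> k ki; rewrite !mxE eq_sym (negPf ki) mulr0.
Qed.

End Pairing.

Section LieBracket.
Variables (R : realType) (d : nat) (br : 'cV[R]_d -> 'cV[R]_d -> 'cV[R]_d).
Hypothesis br_lie : is_lie_bracket br.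

Lemma brDl x y z : br (x + y) z = br x z + br y z.
Proof. by case: br_lie => linl _ _ _; have := linl 1 x y z; rewrite !scale1r. Qed.

Lemma brDr x y z : br z (x + y) = br z x + br z y.
Proof. by case: br_lie => _ linr _ _; have := linr 1 x y z; rewrite !scale1r. Qed.

Lemma br0r x : br x 0 = 0.
Proof. by apply: (addrI (br x 0)); rewrite -brDr !addr0. Qed.

Lemma brZr a x z : br z (a *: x) = a *: br z x.
Proof.
by case: br_lie => _ linr _ _; have := linr a x 0 z; rewrite !addr0 br0r addr0.
Qed.

Lemma brC x y : br x y = - br y x.
Proof.
case: br_lie => _ _ alt _; have := alt (x + y).
by rewrite brDl !brDr !alt add0r addr0 => /eqP; rewrite addr_eq0 => /eqP.
Qed.

Lemma br_sumr x (F : 'I_d -> 'cV[R]_d) : br x (\sum_k F k) = \sum_k br x (F k).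
Proof. exact: (big_morph (br x) (fun a b => brDr a b x) (br0r x)). Qed.

Lemma pair_coad xi eta z : pair (coad br xi eta) z = - pair eta (br xi z).
Proof.
rewrite pairE {2}(col_delta_decomp z) br_sumr pair_sumr -sumrN.
by apply: eq_bigr => k _; rewrite mxE brZr pairZr mulrC mulrN.
Qed.

End LieBracket.

Section NijenhuisTorsion.
Variables (R : realType) (d : nat) (br : 'cV[R]_d -> 'cV[R]_d -> 'cV[R]_d).
Variable n : 'M[R]_d.

Definition nijenhuis_torsion (x y : 'cV[R]_d) : 'cV[R]_d :=
  br (n *m x) (n *m y) - n *m (br (n *m x) y + br x (n *m y) - n *m br x y).

Lemma NijenhuisE : Nijenhuis br n <-> forall x y, nijenhuis_torsion x y = 0.
Proof.
split=> tor x y; first by rewrite /nijenhuis_torsion tor subrr.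
by apply/esym/eqP; rewrite -subr_eq0; apply/eqP/tor.
Qed.

End NijenhuisTorsion.

Definition cybe_sum (R : realType) (d : nat)
    (br : 'cV[R]_d -> 'cV[R]_d -> 'cV[R]_d) (P : 'M[R]_d) (e1 e2 e3 : 'cV[R]_d) : R :=
  pair e1 (br (P *m e2) (P *m e3)) - pair e2 (br (P *m e1) (P *m e3))
  + pair e3 (br (P *m e1) (P *m e2)).

Lemma CYBEE (R : realType) (d : nat) br (r : 'M[R]_d) :
  CYBE br r <-> forall e1 e2 e3, cybe_sum br (rsharp r) e1 e2 e3 = 0.
Proof. by []. Qed.

Lemma rsharp_nr (R : realType) (d : nat) (n r : 'M[R]_d) :
  rsharp (nr n r) = n *m rsharp r.
Proof. by rewrite /rsharp /nr trmxK. Qed.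

Section Compatible.
Variables (R : realType) (d : nat) (br : 'cV[R]_d -> 'cV[R]_d -> 'cV[R]_d).
Variables (r n : 'M[R]_d).
Hypothesis br_lie : is_lie_bracket br.
Hypothesis r_cybe : CYBE br r.
Hypothesis r_nondeg : rsharp r \in unitmx.
Hypothesis n_rsharp : n *m rsharp r = rsharp r *m tr_op n.
Hypothesis Crn0 : forall eta1 eta2, Crn br r n eta1 eta2 = 0.

Local Notation P := (rsharp r).
Local Notation Q := (invmx (rsharp r)).

Lemma rsharpK (x : 'cV[R]_d) : P *m (Q *m x) = x.
Proof. by rewrite mulmxA mulmxV // mul1mx. Qed.

Lemma rsharp_invK (x : 'cV[R]_d) : Q *m (P *m x) = x.
Proof. by rewrite mulmxA mulVmx // mul1mx. Qed.

Lemma tr_op_inv : n^T *m Q = Q *m n.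
Proof.
have := congr1 (fun M => Q *m M *m Q) n_rsharp.
by rewrite /= !mulmxA mulVmx // mul1mx -!mulmxA mulmxV // mulmx1.
Qed.

Lemma pair_inv_n (a b : 'cV[R]_d) : pair (Q *m a) (n *m b) = pair (Q *m (n *m a)) b.
Proof. by rewrite pair_mulmxr mulmxA tr_op_inv -mulmxA. Qed.

Lemma cocycle_inv (a b c : 'cV[R]_d) :
  pair (Q *m a) (br b c) - pair (Q *m b) (br a c) + pair (Q *m c) (br a b) = 0.
Proof. by have := r_cybe (Q *m a) (Q *m b) (Q *m c); rewrite !rsharpK. Qed.

Lemma Crn0_inv (a b z : 'cV[R]_d) :
  pair (Q *m (n *m b)) (br a z) - pair (Q *m b) (br a (n *m z))
  + pair (Q *m a) (br b (n *m z)) - pair (Q *m (n *m a)) (br b z) = 0.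
Proof.
have := congr1 (fun v => pair v z) (Crn0 (Q *m a) (Q *m b)).
rewrite /= /Crn /tr_op pair0l !pairBl => Crn_z.
rewrite !pair_mulmxl trmxK !(pair_coad br_lie) !rsharpK in Crn_z.
rewrite !mulmxA tr_op_inv -!mulmxA in Crn_z.
by rewrite -Crn_z; lra.
Qed.

Lemma cybe_sum_nr (x1 x2 x3 : 'cV[R]_d) :
  cybe_sum br (n *m P) (Q *m x1) (Q *m x2) (Q *m x3)
  = pair (Q *m x1) (nijenhuis_torsion br n x2 x3).
Proof.
rewrite /cybe_sum /nijenhuis_torsion -!mulmxA !rsharpK.
rewrite pairBr pair_inv_n !pairBr !pairDr pair_inv_n.
have c1 := cocycle_inv (n *m x1) x2 (n *m x3).
have c2 := cocycle_inv (n *m x1) (n *m x2) x3.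
have c3 := cocycle_inv (n *m (n *m x1)) x2 x3.
have c4 := Crn0_inv x2 x3 (n *m x1).
rewrite !(brC br_lie _ (n *m _)) !pairNr in c4.
(* lra stalls on the unfolded [invmx] atoms. *)
set Q := invmx P.
lra.
Qed.

End Compatible.

Theorem mainTheorem8 (R : realType) (d : nat)
  (br : 'cV[R]_d -> 'cV[R]_d -> 'cV[R]_d) (r n : 'M[R]_d) :
  is_lie_bracket br ->
  bivector r ->
  CYBE br r ->
  rsharp r \in unitmx ->
  n *m rsharp r = rsharp r *m tr_op n ->
  (forall eta1 eta2 : 'cV[R]_d, Crn br r n eta1 eta2 = 0) ->
  (CYBE br (nr n r) <-> Nijenhuis br n).
Proof.
move=> br_lie _ r_cybe r_nondeg n_rsharp Crn0.
have torsionE := cybe_sum_nr br_lie r_cybe r_nondeg n_rsharp Crn0.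
rewrite CYBEE NijenhuisE rsharp_nr; split=> [nr_cybe x y | tor0 e1 e2 e3].
- apply: pair_eq0 => a; rewrite -[a](rsharp_invK r_nondeg) -torsionE.
  exact: nr_cybe.
- rewrite -[e1](rsharp_invK r_nondeg) -[e2](rsharp_invK r_nondeg).
  by rewrite -[e3](rsharp_invK r_nondeg) torsionE tor0 pair0r.
Qed.
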